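(* Let $\omega:\Gamma\times\Gamma\to\Gamma$ be a group morphism. There is a subgroup $\Gamma_\omega\le\Gamma$ such that $\omega$ restricts to a surjective group morphism $\omega_{\mathrm{res}}:\Gamma_\omega\times\Gamma_\omega\to\Gamma_\omega$ and $G(\omega)\cong G(\omega_{\mathrm{res}})$.
   Context: $\{0,1\}^*$ denotes the finite words over $\{0,1\}$; $\mathfrak C=\{0,1\}^{\mathbb N}$. A finite complete prefix code is a finite set $\{t_1,\dots,t_n\}\subset\{0,1\}^*$ such that every $x\in\mathfrak C$ has exactly one $t_i$ as prefix. Thompson's group $V$ is the group of homeomorphisms $v$ of $\mathfrak C$ for which there exist finite complete prefix codes $\{t_i\},\{s_i\}$ and a permutation $\sigma$ with $v(t_iw)=s_{\sigma(i)}w$. For a group morphism $\omega:\Gamma^2\to\Gamma$, $K(\omega)$ is the group of maps $a:\{0,1\}^*\to\Gamma$ (pointwise product) with $a(u)=\omega(a(u0),a(u1))$ for all $u$; $V$ acts on it by $\pi(v)(a)(s_{\sigma(i)}u)=a(t_iu)$ for all $i$, $u$ (determining $\pi(v)(a)\in K(\omega)$ uniquely); $G(\omega):=K(\omega)\rtimes V$ with $vav^{-1}=\pi(v)(a)$. *)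

From HB Require Import structures.
From mathcomp Require Import all_boot all_fingroup.
From Stdlib Require Import ClassicalEpsilon ProofIrrelevance.

Set Implicit Arguments.
Unset Strict Implicit.
Unset Printing Implicit Defensive.

Record AbsGroup := MkGroup {
  gcar :> Type;
  gmul : gcar -> gcar -> gcar;
  ginv : gcar -> gcar;
  gone : gcar;
  gmulA : forall x y z, gmul x (gmul y z) = gmul (gmul x y) z;
  gmul1g : forall x, gmul gone x = x;
  gmulVg : forall x, gmul (ginv x) x = gone }.

Definition is_hom2 (Γ : AbsGroup) (ω : Γ * Γ -> Γ) : Prop :=
  forall x1 y1 x2 y2 : Γ,
    ω (gmul x1 x2, gmul y1 y2) = gmul (ω (x1, y1)) (ω (x2, y2)).

Record is_subgroup (Γ : AbsGroup) (S : Γ -> Prop) : Prop := {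
  sg1 : S (gone Γ);
  sgM : forall x y, S x -> S y -> S (gmul x y);
  sgV : forall x, S x -> S (ginv x) }.

Lemma sig_eq_pi (T : Type) (P : T -> Prop) (x y : {z | P z}) :
  proj1_sig x = proj1_sig y -> x = y.
Proof.
destruct x as [x px], y as [y py]; simpl; intros E; subst y.
f_equal; apply proof_irrelevance.
Qed.

Section SubGroup.
Variables (Γ : AbsGroup) (S : Γ -> Prop) (HS : is_subgroup S).

Definition sub_mul (x y : {z | S z}) : {z | S z} :=
  exist _ (gmul (proj1_sig x) (proj1_sig y)) (sgM HS (proj2_sig x) (proj2_sig y)).
Definition sub_inv (x : {z | S z}) : {z | S z} :=
  exist _ (ginv (proj1_sig x)) (sgV HS (proj2_sig x)).
Definition sub_one : {z | S z} := exist _ (gone Γ) (sg1 HS).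

Lemma sub_mulA x y z : sub_mul x (sub_mul y z) = sub_mul (sub_mul x y) z.
Proof. apply: sig_eq_pi; exact: gmulA. Qed.
Lemma sub_mul1g x : sub_mul sub_one x = x.
Proof. apply: sig_eq_pi; exact: gmul1g. Qed.
Lemma sub_mulVg x : sub_mul (sub_inv x) x = sub_one.
Proof. apply: sig_eq_pi; exact: gmulVg. Qed.

Definition sub_group : AbsGroup := MkGroup sub_mulA sub_mul1g sub_mulVg.
End SubGroup.

Definition restr (Γ : AbsGroup) (S : Γ -> Prop) (HS : is_subgroup S)
  (ω : Γ * Γ -> Γ) (Hcl : forall x y, S x -> S y -> S (ω (x, y))) :
  sub_group HS * sub_group HS -> sub_group HS :=
  fun p => exist S (ω (proj1_sig p.1, proj1_sig p.2))
                   (Hcl _ _ (proj2_sig p.1) (proj2_sig p.2)).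

Definition cantor := nat -> bool.       (* 0 = false, 1 = true *)
Definition word := seq bool.

Definition cat_inf (t : word) (x : cantor) : cantor :=
  fun k => if k < size t then nth false t k else x (k - size t).

Definition is_prefix (t : word) (x : cantor) : Prop :=
  forall k, k < size t -> x k = nth false t k.

Definition complete_prefix_code (n : nat) (t : 'I_n -> word) : Prop :=
  forall x : cantor, exists! i : 'I_n, is_prefix (t i) x.

Definition code_for (v : cantor -> cantor) (n : nat) (t s : 'I_n -> word)
  (σ : {perm 'I_n}) : Prop :=
  [/\ complete_prefix_code t, complete_prefix_code s &
      forall (i : 'I_n) (w : cantor), v (cat_inf (t i) w) = cat_inf (s (σ i)) w].

(* membership in Thompson's group V (such v is automatically a homeomorphism) *)
Definition inV (v : cantor -> cantor) : Prop :=
  exists n (t s : 'I_n -> word) (σ : {perm 'I_n}), code_for v t s σ.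

Definition inK (Γ : AbsGroup) (ω : Γ * Γ -> Γ) (a : word -> Γ) : Prop :=
  forall u : word, a u = ω (a (rcons u false), a (rcons u true)).

Definition pi_spec (Γ : AbsGroup) (ω : Γ * Γ -> Γ) (v : cantor -> cantor)
  (a b : word -> Γ) : Prop :=
  inK ω b /\
  exists n (t s : 'I_n -> word) (σ : {perm 'I_n}),
    code_for v t s σ /\ forall (i : 'I_n) (u : word), b (s (σ i) ++ u) = a (t i ++ u).

(* π(v)(a): the (unique, for v ∈ V and a ∈ K(ω)) b satisfying pi_spec *)
Definition pi (Γ : AbsGroup) (ω : Γ * Γ -> Γ) (v : cantor -> cantor) (a : word -> Γ)
  : word -> Γ :=
  epsilon (inhabits (fun _ : word => gone Γ)) (pi_spec ω v a).

Definition Gel (Γ : AbsGroup) : Type := ((word -> Γ) * (cantor -> cantor))%type.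

Definition inG (Γ : AbsGroup) (ω : Γ * Γ -> Γ) (x : Gel Γ) : Prop :=
  inK ω x.1 /\ inV x.2.

Definition Gmul (Γ : AbsGroup) (ω : Γ * Γ -> Γ) (x y : Gel Γ) : Gel Γ :=
  (fun u => gmul (x.1 u) (pi ω x.2 y.1 u), fun z => x.2 (y.2 z)).

Definition G_iso (Γ1 Γ2 : AbsGroup) (ω1 : Γ1 * Γ1 -> Γ1) (ω2 : Γ2 * Γ2 -> Γ2) : Prop :=
  exists φ : Gel Γ1 -> Gel Γ2,
    [/\ forall x, inG ω1 x -> inG ω2 (φ x),
        forall x y, inG ω1 x -> inG ω1 y -> φ x = φ y -> x = y,
        forall y, inG ω2 y -> exists2 x, inG ω1 x & φ x = y &
        forall x y, inG ω1 x -> inG ω1 y -> φ (Gmul ω1 x y) = Gmul ω2 (φ x) (φ y)].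

Arguments restr {Γ S} HS {ω} Hcl.

From Pilot Require Import Defs.
From mathcomp Require Import all_boot all_fingroup zify.
From Stdlib Require Import ClassicalEpsilon FunctionalExtensionality.

Set Implicit Arguments.
Unset Strict Implicit.
Unset Printing Implicit Defensive.

(* Take Γ_ω to be the set of root values a(∅) of the elements a of K(ω).  It
   is a subgroup because K(ω) is a group under pointwise product, and it is
   ω-closed by grafting two elements of K(ω) under a new root.  Every value
   a(u) lies in Γ_ω (shift a to the subtree at u), so a(∅) = ω(a(0), a(1))
   shows that ω maps onto Γ_ω, and K(ω) and K(ω_res) consist of the same maps.
   Corestricting values is then the isomorphism G(ω) ≅ G(ω_res); it commutes
   with π(v) because π(v)(a) is characterised by its defining equations: it
   exists (recode a below the target codewords and fill in the finitely many
   shorter words by ω), and it is unique (two candidates agree on all words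
   longer than the codes, and an element of K(ω) is determined there). *)

Section AbsGroupTheory.
Variable Γ : AbsGroup.
Implicit Types x y : Γ.

Lemma gmulgV x : gmul x (ginv x) = gone Γ.
Proof.
rewrite -{1}(gmul1g (gmul x (ginv x))) -{1}(gmulVg (ginv x)) -gmulA.
by rewrite (gmulA (ginv x) x) gmulVg gmul1g gmulVg.
Qed.

Lemma gmulg1 x : gmul x (gone Γ) = x.
Proof. by rewrite -(gmulVg x) gmulA gmulgV gmul1g. Qed.

Lemma ginv_unique x y : gmul x y = gone Γ -> x = ginv y.
Proof. by move=> h; rewrite -[x]gmulg1 -(gmulgV y) gmulA h gmul1g. Qed.

Lemma hom2_1 (ω : Γ * Γ -> Γ) : is_hom2 ω -> ω (gone Γ, gone Γ) = gone Γ.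
Proof.
move=> hω; set e := ω _.
have idem_e : gmul e e = e by rewrite /e -hω gmul1g.
by have := congr1 (gmul (ginv e)) idem_e; rewrite gmulA !gmulVg gmul1g.
Qed.

Lemma hom2_V (ω : Γ * Γ -> Γ) x y : is_hom2 ω -> ω (ginv x, ginv y) = ginv (ω (x, y)).
Proof. by move=> hω; apply: ginv_unique; rewrite -hω !gmulVg hom2_1. Qed.

Lemma restr_hom2 (S : Γ -> Prop) (HS : is_subgroup S) (ω : Γ * Γ -> Γ)
    (Hcl : forall x y, S x -> S y -> S (ω (x, y))) :
  is_hom2 ω -> is_hom2 (restr HS Hcl).
Proof. by move=> hω x1 y1 x2 y2; apply: sig_eq_pi; apply: hω. Qed.

End AbsGroupTheory.

Section CantorSpace.
Implicit Types (p r u : word) (x : cantor).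

Lemma cat_inf_cat p r x : cat_inf (p ++ r) x = cat_inf p (cat_inf r x).
Proof.
apply: functional_extensionality => k; rewrite /cat_inf size_cat nth_cat.
case: (ltnP k (size p)) => hp; first by have -> : k < size p + size r by lia.
case: (ltnP (k - size p) (size r)) => hr; first by have -> : k < size p + size r by lia.
have -> : (k < size p + size r) = false by lia.
by congr x; lia.
Qed.

Lemma is_prefix_cat_inf p x : is_prefix p (cat_inf p x).
Proof. by move=> k hk; rewrite /cat_inf hk. Qed.

Lemma is_prefixP p x : is_prefix p x -> exists w, x = cat_inf p w.
Proof.
move=> hp; exists (fun k => x (k + size p)); apply: functional_extensionality => k.
rewrite /cat_inf; case: ifP => hk; first exact: hp.
by rewrite subnK //; lia.
Qed.

Lemma cat_inf_injr p : injective (cat_inf p).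
Proof.
move=> x x' e; apply: functional_extensionality => k.
have := congr1 (fun y => y (k + size p)) e.
by rewrite /cat_inf ltnNge leq_addl /= addnK.
Qed.

Lemma cat_inf_injl p p' : (forall x, cat_inf p x = cat_inf p' x) -> p = p'.
Proof.
wlog le_pp' : p p' / size p <= size p'.
  move=> hw e; case: (leqP (size p) (size p')) => [/hw -> //|/ltnW/hw e'].
  by apply/esym/e' => x.
move=> e.
have eq_size : size p = size p'.
  apply/eqP; rewrite eqn_leq le_pp' leqNgt; apply/negP => lt_pp'.
  have := congr1 (fun y => y (size p)) (e (fun _ => ~~ nth false p' (size p))).
  by rewrite /cat_inf ltnn lt_pp'; case: nth.
apply: (@eq_from_nth _ false) => // k hk.
have := congr1 (fun y => y k) (e (fun _ => false)).
by rewrite /cat_inf hk -eq_size hk.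
Qed.

Lemma is_prefix_cat_inf_prefix p u x :
  is_prefix p (cat_inf u x) -> size p <= size u -> prefix p u.
Proof.
move=> hp le_pu; rewrite prefixE; apply/eqP/(@eq_from_nth _ false).
  by rewrite size_take; case: ltngtP le_pu.
move=> k; rewrite size_take_min leq_min => /andP [hkp hku].
by rewrite nth_take // -(hp k hkp) /cat_inf hku.
Qed.

End CantorSpace.

Section CompletePrefixCode.
Variables (n : nat) (s : 'I_n -> word).
Hypothesis s_code : complete_prefix_code s.

Lemma code_prefix_uniq i j x : is_prefix (s i) x -> is_prefix (s j) x -> i = j.
Proof. by move=> hi hj; case: (s_code x) => k [_ hk]; rewrite -(hk _ hi) -(hk _ hj). Qed.

Lemma code_cat_inj i j r r' : s i ++ r = s j ++ r' -> i = j /\ r = r'.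
Proof.
move=> e; have eq_ij : i = j.
  apply: (@code_prefix_uniq _ _ (cat_inf (s i ++ r) (fun _ => false))).
    by rewrite cat_inf_cat; apply: is_prefix_cat_inf.
  by rewrite e cat_inf_cat; apply: is_prefix_cat_inf.
by split=> //; subst j; have := congr1 (drop (size (s i))) e; rewrite !drop_size_cat.
Qed.

Lemma complete_prefix_code_perm (σ : {perm 'I_n}) : complete_prefix_code (fun i => s (σ i)).
Proof.
move=> x; have [j [hj uniq_j]] := s_code x.
exists (σ^-1 j)%g; split=> [|i hi]; first by rewrite permKV.
by apply: (@perm_inj _ σ); rewrite permKV (uniq_j _ hi).
Qed.

End CompletePrefixCode.

Definition code_depth n (s : 'I_n -> word) : nat := \max_i size (s i).

Lemma code_prefix_long n (s : 'I_n -> word) u :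
  complete_prefix_code s -> code_depth s <= size u -> exists i r, u = s i ++ r.
Proof.
move=> s_code hu; have [i [hi _]] := s_code (cat_inf u (fun _ => false)).
have /prefixP [r ->] : prefix (s i) u.
  by apply: is_prefix_cat_inf_prefix hi _; apply: leq_trans (leq_bigmax i) hu.
by exists i, r.
Qed.

Lemma code_for_cat v n (t s : 'I_n -> word) (σ : {perm 'I_n}) i r x :
  code_for v t s σ -> v (cat_inf (t i ++ r) x) = cat_inf (s (σ i) ++ r) x.
Proof. by case=> _ _ hv; rewrite !cat_inf_cat hv. Qed.

Lemma code_for_inj v n (t s : 'I_n -> word) (σ : {perm 'I_n}) :
  code_for v t s σ -> injective v.
Proof.
case=> t_code s_code v_code y y'.
have [i [/is_prefixP [w ->] _]] := t_code y.
have [k [/is_prefixP [w' ->] _]] := t_code y'.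
rewrite !v_code => e.
have eq_ik : σ i = σ k.
  apply: (code_prefix_uniq s_code (x := cat_inf (s (σ i)) w)).
    exact: is_prefix_cat_inf.
  by rewrite e; apply: is_prefix_cat_inf.
by move: e; rewrite (perm_inj eq_ik) => /cat_inf_injr ->.
Qed.

Section KOmega.
Variables (Γ : AbsGroup) (ω : Γ * Γ -> Γ).
Implicit Types (a b f : word -> Γ) (u : word).

Lemma inK_eq_long a b N :
  inK ω a -> inK ω b -> (forall u, N <= size u -> a u = b u) -> a = b.
Proof.
move=> ha hb eq_long; apply: functional_extensionality => u.
have [k] := ubnP (N - size u); elim: k u => // k IH u hk.
case: (leqP N (size u)) => hu; first exact: eq_long.
by rewrite ha hb !IH // size_rcons; lia.
Qed.

Fixpoint eval_tree f N u : Γ :=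
  if N is N'.+1 then ω (eval_tree f N' (rcons u false), eval_tree f N' (rcons u true))
  else f u.

Lemma inK_eval_tree f M :
  (forall u, M <= size u -> f u = ω (f (rcons u false), f (rcons u true))) ->
  inK ω (fun u => eval_tree f (M - size u) u).
Proof.
move=> hf u /=; rewrite !size_rcons; case: (leqP M (size u)) => hu.
  have [-> ->] : M - size u = 0 /\ M - (size u).+1 = 0 by lia.
  exact: hf.
by have -> : M - size u = (M - (size u).+1).+1 by lia.
Qed.

Lemma eval_tree_id (P : word -> Prop) f :
  (forall u c, P u -> P (rcons u c)) ->
  (forall u, P u -> f u = ω (f (rcons u false), f (rcons u true))) ->
  forall N u, P u -> eval_tree f N u = f u.
Proof.
move=> P_rcons hf; elim=> [//|N IH] u Pu /=.
by rewrite (hf _ Pu) !IH //; apply: P_rcons.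
Qed.

(* [gone Γ] is junk: recode is only used on words extending a codeword. *)
Definition recode n (t s : 'I_n -> word) a u : Γ :=
  if [pick i | prefix (s i) u] is Some i then a (t i ++ drop (size (s i)) u)
  else gone Γ.

Lemma recode_cat n (t s : 'I_n -> word) a i r :
  complete_prefix_code s -> recode t s a (s i ++ r) = a (t i ++ r).
Proof.
move=> s_code; rewrite /recode; case: pickP => [j /prefixP [r' e] | /(_ i)].
  by have [<- ->] := code_cat_inj s_code e; rewrite drop_size_cat.
by rewrite prefix_prefix.
Qed.

Lemma pi_spec_exists v a : inV v -> inK ω a -> exists b, Defs.pi_spec ω v a b.
Proof.
case=> n [t [s [σ hv]]] ha; have [_ s_code _] := hv.
pose sσ i := s (σ i).
have sσ_code : complete_prefix_code sσ by apply: complete_prefix_code_perm.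
pose P u := exists i r, u = sσ i ++ r.
have P_rcons u c : P u -> P (rcons u c).
  by case=> i [r ->]; exists i, (rcons r c); rewrite rcons_cat.
have recodeK u : P u -> recode t sσ a u =
    ω (recode t sσ a (rcons u false), recode t sσ a (rcons u true)).
  by case=> i [r ->]; rewrite !rcons_cat !recode_cat // ha !rcons_cat.
exists (fun u => eval_tree (recode t sσ a) (code_depth sσ - size u) u); split.
  by apply: inK_eval_tree => u /(code_prefix_long sσ_code) /recodeK.
exists n, t, s, σ; split=> // i u.
by rewrite (eval_tree_id P_rcons recodeK) ?recode_cat //; exists i, u.
Qed.

Lemma pi_spec_unique v a b b' : Defs.pi_spec ω v a b -> Defs.pi_spec ω v a b' -> b = b'.
Proof.
case=> hb [n [t [s [σ [hv hbs]]]]]; case=> hb' [n' [t' [s' [σ' [hv' hbs']]]]].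
have [_ s_code _] := hv; have [_ s'_code _] := hv'.
pose N := maxn (code_depth (fun i => s (σ i))) (code_depth (fun i => s' (σ' i))).
apply: (@inK_eq_long _ _ N) => // z; rewrite geq_max => /andP [hz hz'].
have [i [r ez]] := code_prefix_long (complete_prefix_code_perm s_code σ) hz.
have [k [r' ez']] := code_prefix_long (complete_prefix_code_perm s'_code σ') hz'.
rewrite {1}ez hbs ez' hbs'; congr a; apply: cat_inf_injl => x.
apply: (code_for_inj hv).
by rewrite (code_for_cat _ _ _ hv) (code_for_cat _ _ _ hv') -ez -ez'.
Qed.

Lemma pi_specP v a : inV v -> inK ω a -> Defs.pi_spec ω v a (Defs.pi ω v a).
Proof. by move=> hv ha; apply: epsilon_spec; apply: pi_spec_exists. Qed.

End KOmega.

Section RootValues.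
Variables (Γ : AbsGroup) (ω : Γ * Γ -> Γ).
Implicit Types (a b : word -> Γ) (x y : Γ).

Lemma inK_mul a b : is_hom2 ω -> inK ω a -> inK ω b -> inK ω (fun u => gmul (a u) (b u)).
Proof. by move=> hω ha hb u; rewrite hω -ha -hb. Qed.

Lemma inK_inv a : is_hom2 ω -> inK ω a -> inK ω (fun u => ginv (a u)).
Proof. by move=> hω ha u; rewrite hom2_V // -ha. Qed.

Lemma inK_one : is_hom2 ω -> inK ω (fun _ => gone Γ).
Proof. by move=> hω u; rewrite hom2_1. Qed.

Definition Kroot x : Prop := exists a, inK ω a /\ a [::] = x.

Lemma Kroot_val a u : inK ω a -> Kroot (a u).
Proof.
move=> ha; exists (fun w => a (u ++ w)); split; last by rewrite cats0.
by move=> w; rewrite ha !rcons_cat.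
Qed.

Lemma Kroot_subgroup : is_hom2 ω -> is_subgroup Kroot.
Proof.
move=> hω; split.
- by exists (fun _ => gone Γ); split=> //; apply: inK_one.
- move=> _ _ [a [ha <-]] [b [hb <-]].
  by exists (fun u => gmul (a u) (b u)); split=> //; apply: inK_mul.
- move=> _ [a [ha <-]].
  by exists (fun u => ginv (a u)); split=> //; apply: inK_inv.
Qed.

Lemma Kroot_closed x y : Kroot x -> Kroot y -> Kroot (ω (x, y)).
Proof.
move=> [a [ha <-]] [b [hb <-]].
exists (fun u => if u is c :: w then (if c then b w else a w) else ω (a [::], b [::])).
by split=> // -[|[] w] /=.
Qed.

Lemma restr_Kroot_surj (HS : is_subgroup Kroot)
    (Hcl : forall x y, Kroot x -> Kroot y -> Kroot (ω (x, y))) (z : sub_group HS) :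
  exists p, restr HS Hcl p = z.
Proof.
case: z => x [a [ha ea]].
exists (exist _ (a [:: false]) (Kroot_val [:: false] ha),
        exist _ (a [:: true]) (Kroot_val [:: true] ha)).
by apply: sig_eq_pi; rewrite /= -ea (ha [::]).
Qed.

End RootValues.

Section Corestriction.
Variables (Γ : AbsGroup) (ω : Γ * Γ -> Γ) (Hω : is_hom2 ω).
Variables (HS : is_subgroup (Kroot ω))
          (Hcl : forall x y : Γ, Kroot ω x -> Kroot ω y -> Kroot ω (ω (x, y))).
Local Notation ωres := (restr HS Hcl).
Implicit Types (a b : word -> Γ) (c d : word -> sub_group HS).

Definition corestr a u : sub_group HS :=
  if excluded_middle_informative (Kroot ω (a u)) is left p then exist _ (a u) p
  else sub_one HS.

Lemma corestrK a : inK ω a -> forall u, proj1_sig (corestr a u) = a u.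
Proof.
by move=> ha u; rewrite /corestr; case: excluded_middle_informative => // /(_ (Kroot_val u ha)).
Qed.

Lemma valK c : corestr (fun u => proj1_sig (c u)) = c.
Proof.
apply: functional_extensionality => u; apply: sig_eq_pi.
by rewrite /corestr; case: excluded_middle_informative => // /(_ (proj2_sig (c u))).
Qed.

Lemma inK_corestr a : inK ω a -> inK ωres (corestr a).
Proof. by move=> ha u; apply: sig_eq_pi; rewrite /= !corestrK. Qed.

Lemma inK_val c : inK ωres c -> inK ω (fun u => proj1_sig (c u)).
Proof. by move=> hc u; rewrite {1}hc. Qed.

Lemma pi_spec_val v c d : Defs.pi_spec ωres v c d ->
  Defs.pi_spec ω v (fun u => proj1_sig (c u)) (fun u => proj1_sig (d u)).
Proof.
case=> hd [n [t [s [σ [hv hds]]]]]; split; first exact: inK_val.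
by exists n, t, s, σ; split=> // i u; rewrite hds.
Qed.

Lemma pi_corestr v a : inV v -> inK ω a ->
  forall u, proj1_sig (Defs.pi ωres v (corestr a) u) = Defs.pi ω v a u.
Proof.
move=> hv ha u; have := pi_spec_val (pi_specP hv (inK_corestr ha)).
by rewrite (functional_extensionality _ _ (corestrK ha)) => /(pi_spec_unique (pi_specP hv ha)) ->.
Qed.

Lemma G_iso_restr : G_iso ω ωres.
Proof.
exists (fun x => (corestr x.1, x.2)); split.
- by move=> [a v] [ha hv]; split=> //=; apply: inK_corestr.
- move=> [a v] [a' v'] [/= ha _] [/= ha' _] [ea ->]; congr pair.
  by apply: functional_extensionality => u; rewrite -corestrK // ea corestrK.
- move=> [c v] [/= hc hv]; exists (fun u => proj1_sig (c u), v); last by rewrite /= valK.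
  by split=> //; apply: inK_val.
- move=> [a v] [b w] [/= ha hv] [/= hb _]; congr pair.
  apply: functional_extensionality => u; apply: sig_eq_pi.
  have hab : inK ω (fun u => gmul (a u) (Defs.pi ω v b u)).
    by apply: inK_mul => //; case: (pi_specP hv hb).
  by rewrite /= (corestrK hab) corestrK // pi_corestr.
Qed.

End Corestriction.

Unset Implicit Arguments.

Theorem mainTheorem16 (Γ : Defs.AbsGroup) (ω : Γ * Γ -> Γ) (Hω : is_hom2 ω) :
  exists (S : Γ -> Prop) (HS : is_subgroup S)
         (Hcl : forall x y : Γ, S x -> S y -> S (ω (x, y))),
    [/\ is_hom2 (restr HS Hcl),
        (forall z : sub_group HS, exists p, restr HS Hcl p = z) &
        G_iso ω (restr HS Hcl)].
Proof.
exists (Kroot ω), (Kroot_subgroup Hω), (@Kroot_closed Γ ω); split.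
- exact: restr_hom2.
- exact: restr_Kroot_surj.
- exact: G_iso_restr.
Qed.
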